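(* Let $\mathcal{H}$ be a Hilbert space of finite dimension $d$, let $\rho,\eta\in\mathcal{D}(\mathcal{H})$ be quantum states and let $s>0$. Then $\eta=\frac{\rho+s'\tau}{1+s'}$ for some real number $0<s'\le s$ and some state $\tau\in\mathcal{D}(\mathcal{H})$ if and only if $S_m\!\left(\frac{1+s}{s}\eta-\frac1s\rho\right)\ge 0$ for all $m=1,2,\dots,d$.
   Context: $\mathcal{D}(\mathcal{H})$ is the set of density operators on $\mathcal{H}$. For a Hermitian operator $X$ on $\mathcal{H}$, define recursively $S_0(X)=1$ and $S_m(X)=\frac1m\sum_{l=1}^m(-1)^{l-1}\operatorname{tr}[X^l]\,S_{m-l}(X)$ for $m\ge1$. *)

From HB Require Import structures.
From mathcomp Require Import all_boot all_order all_algebra.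
From mathcomp Require Export complex.
Set Implicit Arguments. Unset Strict Implicit. Unset Printing Implicit Defensive.
Import Order.TTheory GRing.Theory Num.Theory.
Local Open Scope ring_scope.

(* Scalars: C = R[i], the complex numbers over an arbitrary real closed
   field R (e.g. the real numbers).  The Hilbert space H of dimension d is
   C^d (column vectors 'cV[R[i]]_d); operators on H are d x d matrices. *)

Definition adjmx (R : rcfType) (m n : nat) (A : 'M[R[i]]_(m, n)) : 'M[R[i]]_(n, m) :=
  (map_mx Num.conj A)^T.

(* positive semidefinite operator: <v, A v> >= 0 for every vector v
   (over C this forces A to be Hermitian) *)
Definition psd (R : rcfType) (d : nat) (A : 'M[R[i]]_d) : Prop :=
  forall v : 'cV[R[i]]_d, 0 <= (adjmx v *m A *m v) 0 0.

Definition density (R : rcfType) (d : nat) (A : 'M[R[i]]_d) : Prop :=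
  psd A /\ \tr A = 1.

(* Sseq X m = [:: S_0(X); ...; S_m(X)], following the recursion
   S_0 = 1, S_m = 1/m * sum_{l=1}^m (-1)^(l-1) tr[X^l] S_(m-l)
   (index l here is shifted by one: l < m stands for l+1 in 1..m). *)
Fixpoint Sseq (R : rcfType) (d : nat) (X : 'M[R[i]]_d) (m : nat) : seq R[i] :=
  match m with
  | 0 => [:: 1]
  | m'.+1 =>
      let s := Sseq X m' in
      rcons s ((m'.+1)%:R^-1 *
        \sum_(l < m'.+1) (-1) ^+ l * \tr (X ^+ l.+1) * nth 0 s (m'.+1 - l.+1)%N)
  end.

Definition Sfun (R : rcfType) (d : nat) (X : 'M[R[i]]_d) (m : nat) : R[i] :=
  nth 0 (Sseq X m) m.

(* Let X := ((1 + s)/s) eta - rho/s.  If eta = (rho + s' tau)/(1 + s') with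
   0 < s' <= s, then X is a nonnegative combination of rho and tau, hence positive
   semidefinite; conversely, if X >= 0 then tr X = 1 and eta = (rho + s X)/(1 + s).
   So the mixture condition says exactly that X >= 0.  X is Hermitian, and by
   Newton's identities S_m(X) is the m-th elementary symmetric function of its
   eigenvalues, i.e. the m-th coefficient of prod_j (1 + lambda_j t).  Real
   lambda_j are all nonnegative iff these coefficients are: if lambda_j < 0, the
   product vanishes at t = -1/lambda_j > 0, where it is at least 1. *)

From HB Require Import structures.
From mathcomp Require Import all_boot all_order all_algebra.
From mathcomp Require Import complex.
From mathcomp Require Import ring zify.
Import Order.TTheory GRing.Theory Num.Theory.
Set Implicit Arguments.
Unset Strict Implicit.
Unset Printing Implicit Defensive.
Local Open Scope ring_scope.

Section NewtonIdentities.
Context {K : comNzRingType}.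
Implicit Types (x : K) (s : seq K).

Definition esym_poly s : {poly K} := \prod_(x <- s) (x%:P * 'X + 1).

(* The power series of [\sum_(x <- s) x / (1 + x 'X)], the logarithmic derivative
   of [esym_poly s], truncated at degree [N]. *)
Definition logder_trunc (N : nat) s : {poly K} :=
  \sum_(x <- s) x%:P * \poly_(l < N) ((-x) ^+ l).

Lemma mul_geom_poly x N :
  (x%:P * 'X + 1) * \poly_(l < N) ((-x) ^+ l) = 1 - ((-x) ^+ N)%:P * 'X^N.
Proof.
pose y := (-x)%:P * 'X.
have yE l : y ^+ l = ((-x) ^+ l)%:P * 'X^l by rewrite exprMn polyC_exp.
have -> : \poly_(l < N) ((-x) ^+ l) = \sum_(l < N) y ^+ l.
  by rewrite poly_def; apply: eq_bigr => l _; rewrite yE mul_polyC.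
have -> : x%:P * 'X + 1 = - (y - 1) by rewrite /y polyCN mulNr opprB opprK addrC.
by rewrite mulNr -subrX1 opprB yE.
Qed.

Lemma deriv_esym_poly N s :
  exists q, (esym_poly s)^`() = logder_trunc N s * esym_poly s + q * 'X^N.
Proof.
elim: s => [|x s [q IH]].
  by exists 0; rewrite /esym_poly /logder_trunc !big_nil -polyC1 derivC; ring.
exists ((x * (-x) ^+ N)%:P * esym_poly s + (x%:P * 'X + 1) * q).
rewrite /esym_poly /logder_trunc !big_cons -/(esym_poly s) -/(logder_trunc N s).
rewrite derivM IH -polyC1 derivMXaddC derivC mul0r addr0 polyC1.
have FG := mul_geom_poly x N.
set F := x%:P * 'X + 1 in FG *; set G := \poly_(l < N) _ in FG *.
have -> : (x%:P * G + logder_trunc N s) * (F * esym_poly s)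
    = x%:P * esym_poly s * (F * G) + F * (logder_trunc N s * esym_poly s) by ring.
by rewrite FG polyCM; ring.
Qed.

Lemma newton_esym_poly s m :
  (esym_poly s)`_m.+1 *+ m.+1 =
  \sum_(l < m.+1) (-1) ^+ l * (\sum_(x <- s) x ^+ l.+1) * (esym_poly s)`_(m - l).
Proof.
rewrite -coef_deriv; have [q ->] := deriv_esym_poly m.+1 s.
rewrite coefD coefMXn ltnSn addr0 coefM; apply: eq_bigr => l _; congr (_ * _).
rewrite /logder_trunc coef_sum mulr_sumr; apply: eq_bigr => x _.
by rewrite coefCM coef_poly ltn_ord exprS mulrCA -exprNn.
Qed.

Lemma coef0_esym_poly s : (esym_poly s)`_0 = 1.
Proof.
elim: s => [|x s IH]; first by rewrite /esym_poly big_nil coef1.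
by rewrite /esym_poly big_cons coef0M -/(esym_poly s) IH coefD coefMX coef1 add0r mulr1.
Qed.

Lemma size_esym_poly s : (size (esym_poly s) <= (size s).+1)%N.
Proof.
elim: s => [|x s IH]; first by rewrite /esym_poly big_nil size_poly1.
rewrite /esym_poly big_cons -/(esym_poly s) (leq_trans (size_polyMleq _ _)) //.
have size_lin : (size (x%:P * 'X + 1)%R <= 2)%N.
  by rewrite -polyC1 size_MXaddC; case: ifP => // _; apply: size_polyC_leq1.
by have := leq_add size_lin IH; rewrite /=; lia.
Qed.

End NewtonIdentities.

Section SignsOfElementarySymmetric.
Context {K : numFieldType}.
Implicit Types (x : K) (s : seq K).

Lemma coef_esym_poly_ge0 s : {in s, forall x, 0 <= x} -> forall k, 0 <= (esym_poly s)`_k.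
Proof.
elim: s => [|x s IH] s_ge0 k; first by rewrite /esym_poly big_nil coef1; case: (k == 0)%N.
rewrite /esym_poly big_cons -/(esym_poly s) coefM; apply: sumr_ge0 => j _.
apply: mulr_ge0; last by apply: IH => y ys; apply: s_ge0; rewrite in_cons ys orbT.
rewrite coefD coefMX coef1 coefC; have := s_ge0 x (mem_head _ _).
by case: (nat_of_ord j) => [|[|j']] /=; rewrite ?addr0 ?add0r ?ler01.
Qed.

Lemma root_esym_poly s x : x \in s -> x != 0 -> root (esym_poly s) (- x^-1).
Proof.
move=> xs x_neq0; rewrite /root /esym_poly horner_prod prodf_seq_eq0.
apply/hasP; exists x => //=.
by rewrite hornerD hornerMX !hornerC mulrN divff // addrC subrr.
Qed.

Lemma esym_poly_coef_ge0P s : {in s, forall x, x \is Num.real} ->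
  (forall k, (1 <= k <= size s)%N -> 0 <= (esym_poly s)`_k) <-> {in s, forall x, 0 <= x}.
Proof.
move=> s_real; split=> [coef_ge0 x xs | s_ge0 k _]; last exact: coef_esym_poly_ge0.
rewrite real_leNgt ?(s_real x xs) ?real0 //.
apply/negP => x_lt0; pose t := - x^-1.
have t_ge0 : 0 <= t by rewrite oppr_ge0 ltW // invr_lt0.
have /rootP := root_esym_poly xs (ltr0_neq0 x_lt0).
rewrite -/t (horner_coef_wide _ (size_esym_poly s)) big_ord_recl.
rewrite coef0_esym_poly expr0 mulr1 => /eqP; apply/negP; rewrite gt_eqF //.
rewrite ltr_pwDl ?ltr01 //; apply: sumr_ge0 => i _; apply: mulr_ge0 (exprn_ge0 _ t_ge0).
by apply: coef_ge0; rewrite /bump /= ltn_ord.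
Qed.

End SignsOfElementarySymmetric.

Section MatrixPowers.
Variables (K : comUnitRingType) (n : nat).

Lemma diag_mx_exp (a : 'rV[K]_n) k : diag_mx a ^+ k = diag_mx (\row_j (a 0 j ^+ k)).
Proof.
elim: k => [|k IH].
  by rewrite expr0 -idmxE -diag_const_mx; congr diag_mx; apply/rowP => j; rewrite !mxE.
by rewrite exprS IH -mulmxE mulmx_diag; congr diag_mx; apply/rowP => j; rewrite !mxE exprS.
Qed.

Lemma exp_similar_mx (P D : 'M[K]_n) k : P \in unitmx ->
  (invmx P *m D *m P) ^+ k = invmx P *m D ^+ k *m P.
Proof.
move=> P_unit; elim: k => [|k IH]; first by rewrite !expr0 -idmxE mulmx1 mulVmx.
by rewrite !exprS IH -!mulmxE !mulmxA (mulmxK P_unit).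
Qed.
End MatrixPowers.

Section QuadraticForms.
Variable R : rcfType.
Local Notation C := R[i].
Variable d : nat.
Implicit Types (A B : 'M[C]_d) (u v w : 'cV[C]_d).

Local Notation form A u v := ((adjmx u *m A *m v) 0 0).
Local Notation delta_cv i := (delta_mx i 0 : 'cV[C]_d).

Lemma adjmxE m n (A : 'M[C]_(m, n)) i j : adjmx A i j = (A j i)^*.
Proof. by rewrite !mxE. Qed.

Lemma adjmxM m n p (A : 'M[C]_(m, n)) (B : 'M[C]_(n, p)) :
  adjmx (A *m B) = adjmx B *m adjmx A.
Proof. by rewrite /adjmx map_mxM trmx_mul. Qed.

Lemma adjmxDZ u w c : adjmx (u + c *: w) = adjmx u + c^* *: adjmx w.
Proof. by apply/matrixP => a b; rewrite !(adjmxE, mxE) rmorphD rmorphM. Qed.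

Lemma form_delta A (i j : 'I_d) : form A (delta_cv i) (delta_cv j) = A i j.
Proof.
have -> : adjmx (delta_cv i) = delta_mx 0 i.
  by apply/matrixP => a b; rewrite adjmxE !mxE; case: eqP; case: eqP; rewrite ?conjC0 ?conjC1.
by rewrite -rowE -colE !mxE.
Qed.

Lemma form_expand A u w c :
  form A (u + c *: w) (u + c *: w) =
  form A u u + c * form A u w + c^* * form A w u + c^* * c * form A w w.
Proof.
rewrite adjmxDZ !mulmxDl !mulmxDr -!scalemxAl -!scalemxAr !scalerA.
move: (adjmx u *m A *m u) (adjmx u *m A *m w) (adjmx w *m A *m u) (adjmx w *m A *m w).
by move=> uu uw wu ww; rewrite !mxE addrA.
Qed.

Lemma eq_conjC_of_real (a b : C) :
  a + b \is Num.real -> 'i * (a - b) \is Num.real -> b = a^*.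
Proof.
rewrite !CrealE rmorphD rmorphM rmorphB /= conjCi => /eqP sum_real /eqP diff_real.
have diff_conj : a^* - b^* = b - a.
  have := congr1 ( *%R 'i) diff_real.
  by rewrite !mulrA mulrN -expr2 sqrCi opprK mul1r mulN1r => ->; rewrite opprB.
apply: (@mulIf _ 2%:R); first by rewrite pnatr_eq0.
have -> : a^* * 2%:R = (a^* + b^*) + (a^* - b^*) by ring.
by rewrite sum_real diff_conj; ring.
Qed.

Lemma psd_hermsymmx A : psd A -> A \is hermsymmx.
Proof.
move=> psdA; apply/is_hermitianmxP; rewrite expr0 scale1r.
apply/matrixP => i j; rewrite !mxE.
have diag_real k : A k k \is Num.real.
  by rewrite -form_delta; exact/ger0_real/psdA.
have diag_sum_real : A j j + A i i \is Num.real by rewrite rpredD.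
have real_form c : A j j + c * A j i + c^* * A i j + c^* * c * A i i \is Num.real.
  by have := psdA (delta_cv j + c *: delta_cv i); rewrite form_expand !form_delta => /ger0_real.
have := real_form 1; have := real_form 'i; rewrite conjC1 conjCi.
have -> : A j j + 'i * A j i + - 'i * A i j + - 'i * 'i * A i i
    = 'i * (A j i - A i j) + (A j j - 'i * 'i * A i i) by ring.
rewrite -expr2 sqrCi mulN1r opprK.
have -> : A j j + 1 * A j i + 1 * A i j + 1 * 1 * A i i
    = (A j i + A i j) + (A j j + A i i) by ring.
by rewrite !(rpredDr _ diag_sum_real) => diff_real sum_real; apply: eq_conjC_of_real.
Qed.

Lemma hermsymmx_lin (a b : C) A B : a \is Num.real -> b \is Num.real ->
  A \is hermsymmx -> B \is hermsymmx -> a *: A + b *: B \is hermsymmx.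
Proof.
move=> a_real b_real /is_hermitianmxP hA /is_hermitianmxP hB; apply/is_hermitianmxP.
rewrite expr0 !scale1r in hA hB *; rewrite {1}hA {1}hB; apply/matrixP => i j.
by rewrite !mxE rmorphD !rmorphM /= (conj_Creal a_real) (conj_Creal b_real).
Qed.

Lemma psd_lin (a b : C) A B : 0 <= a -> 0 <= b -> psd A -> psd B -> psd (a *: A + b *: B).
Proof.
move=> a_ge0 b_ge0 psdA psdB v.
have := psdA v; have := psdB v.
rewrite mulmxDr mulmxDl -!scalemxAr -!scalemxAl !mxE => form_B form_A.
by rewrite addr_ge0 ?mulr_ge0.
Qed.

Section Spectral.
Variable X : 'M[C]_d.
Hypothesis X_herm : X \is hermsymmx.
Let P := spectralmx X.
Let lambda := spectral_diag X.

Let P_unit : P \in unitmx. Proof. exact: spectral_unit. Qed.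

Let XE : X = invmx P *m diag_mx lambda *m P.
Proof. exact/orthomx_spectralP/hermitian_normalmx. Qed.

Lemma form_spectral v : form X v v = form (diag_mx lambda) (P *m v) (P *m v).
Proof.
have adjP : adjmx P = invmx P.
  by rewrite invmx_unitary ?spectral_unitarymx // /adjmx map_trmx.
by rewrite {1}XE adjmxM adjP !mulmxA.
Qed.

Lemma psd_spectral_diag_ge0P : psd X <-> forall j, 0 <= lambda 0 j.
Proof.
split=> [psdX j | lambda_ge0 v].
  have := psdX (invmx P *m delta_cv j).
  by rewrite form_spectral (mulKVmx P_unit) form_delta mxE eqxx mulr1n.
rewrite form_spectral mxE; apply: sumr_ge0 => k _.
rewrite mul_mx_diag !mxE mulrAC mulr_ge0 //.
by rewrite mulrC mul_conjC_ge0.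
Qed.

Lemma mxtrace_exp_spectral k : \tr (X ^+ k) = \sum_j lambda 0 j ^+ k.
Proof.
rewrite {1}XE (exp_similar_mx _ _ P_unit) diag_mx_exp.
rewrite mxtrace_mulC mulmxA (mulmxV P_unit) mul1mx mxtrace_diag.
by apply: eq_bigr => j _; rewrite mxE.
Qed.
End Spectral.
End QuadraticForms.

Section Mixtures.
Variables (F : fieldType) (V : lmodType F).
Implicit Types (rho eta tau : V) (s t : F).

Lemma recenter_mixture rho tau s t : s != 0 -> 1 + t != 0 ->
  ((1 + s) / s) *: ((1 + t)^-1 *: (rho + t *: tau)) - s^-1 *: rho =
  ((s - t) / (s * (1 + t))) *: rho + ((1 + s) * t / (s * (1 + t))) *: tau.
Proof.
move=> s_neq0 t_neq0; rewrite !scalerA scalerDr !scalerA addrAC -scalerBl.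
by congr (_ *: _ + _ *: _); field; rewrite s_neq0 t_neq0.
Qed.

Lemma mixture_recenter rho eta s : s != 0 -> 1 + s != 0 ->
  eta = (1 + s)^-1 *: (rho + s *: (((1 + s) / s) *: eta - s^-1 *: rho)).
Proof.
move=> s_neq0 s1_neq0; rewrite scalerBr !scalerA mulrCA !divff // mulr1 scale1r.
by rewrite [rho + _]addrC subrK scalerA mulVf // scale1r.
Qed.
End Mixtures.

Section NewtonForMatrices.
Variable R : rcfType.
Local Notation C := R[i].

Lemma Sfun_esym_poly d (X : 'M[C]_d) (s : seq C) :
  (forall l, \tr (X ^+ l.+1) = \sum_(x <- s) x ^+ l.+1) ->
  forall m, Sfun X m = (esym_poly s)`_m.
Proof.
move=> trX; suff SseqE m : Sseq X m = mkseq (fun k => (esym_poly s)`_k) m.+1.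
  by move=> m; rewrite /Sfun SseqE nth_mkseq.
elim: m => [|m IH]; first by rewrite /mkseq /= coef0_esym_poly.
rewrite [Sseq X m.+1]/= IH [in RHS]mkseqS; congr rcons.
apply: (@mulfI _ m.+1%:R); first by rewrite pnatr_eq0.
rewrite mulrA mulfV ?pnatr_eq0 // mul1r mulr_natl newton_esym_poly.
apply: eq_bigr => l _; rewrite trX nth_mkseq ?subSS //.
exact: leq_ltn_trans (leq_subr _ _) (ltnSn m).
Qed.

Lemma psd_Sfun_ge0P d (X : 'M[C]_d) : X \is hermsymmx ->
  psd X <-> forall m, (1 <= m <= d)%N -> 0 <= Sfun X m.
Proof.
move=> X_herm; pose s := [seq spectral_diag X 0 j | j <- enum 'I_d].
have trX l : \tr (X ^+ l.+1) = \sum_(x <- s) x ^+ l.+1.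
  by rewrite mxtrace_exp_spectral // big_map big_enum.
have s_real : {in s, forall x, x \is Num.real}.
  move=> _ /mapP [j _ ->]; apply: (mxOverP (hermitian_spectral_diag_real X_herm)).
have size_s : size s = d by rewrite size_map size_enum_ord.
rewrite (psd_spectral_diag_ge0P X_herm); transitivity {in s, forall x, 0 <= x}.
  split=> [lambda_ge0 _ /mapP [j _ ->] // | s_ge0 j].
  by apply: s_ge0; apply: map_f; rewrite mem_enum.
rewrite -(esym_poly_coef_ge0P s_real) size_s.
by split=> coef_ge0 m /coef_ge0; rewrite (Sfun_esym_poly trX).
Qed.
End NewtonForMatrices.

Theorem lemma4 (R : rcfType) (d : nat) (rho eta : 'M[R[i]]_d) (s : R) :
  density rho -> density eta -> 0 < s ->
  (exists (s' : R) (tau : 'M[R[i]]_d),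
      [/\ 0 < s', s' <= s, density tau &
          eta = (1 + (s'%:C)%C)^-1 *: (rho + (s'%:C)%C *: tau)])
  <->
  (forall m : nat, (1 <= m <= d)%N ->
      0 <= Sfun (((1 + (s%:C)%C) / (s%:C)%C) *: eta - (s%:C)%C^-1 *: rho) m).
Proof.
move=> [psd_rho tr_rho] [psd_eta tr_eta] s_gt0.
have sC_gt0 : 0 < (s%:C)%C :> R[i] by rewrite ltcR.
set sC := (s%:C)%C in sC_gt0 *.
have sC_neq0 : sC != 0 by rewrite gt_eqF.
have sC1_gt0 : 0 < 1 + sC by rewrite addr_gt0.
set X := _ - _.
have X_herm : X \is hermsymmx.
  rewrite /X -scaleNr hermsymmx_lin ?rpredN ?psd_hermsymmx // ger0_real //.
    by rewrite divr_ge0 ?ltW.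
  by rewrite invr_ge0 ltW.
rewrite -(psd_Sfun_ge0P X_herm); split.
  move=> [t [tau [t_gt0 t_le_s [psd_tau _] eta_mix]]].
  have tC_gt0 : 0 < (t%:C)%C :> R[i] by rewrite ltcR.
  have tC_le_sC : (t%:C)%C <= sC by rewrite lecR.
  have tC1_gt0 : 0 < 1 + (t%:C)%C :> R[i] by rewrite addr_gt0.
  have denom_gt0 := mulr_gt0 sC_gt0 tC1_gt0.
  rewrite /X eta_mix recenter_mixture ?gt_eqF //.
  apply: psd_lin => //; rewrite divr_ge0 ?(ltW denom_gt0) //.
    by rewrite subr_ge0.
  by rewrite mulr_ge0 ?ltW.
move=> psd_X; exists s, X; split=> //; last by apply: mixture_recenter; rewrite gt_eqF.
split=> //; rewrite raddfB /= !mxtraceZ tr_eta tr_rho !mulr1.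
by field.
Qed.
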